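(* Let $\Omega := \{0,1\}^{\mathbb{Z}}$, let $\tau:\Omega\to\Omega$ be the shift $(\tau\omega)(x) := \omega(x-1)$, and let $T:\mathbb{Z}\to\mathbb{Z}$ be $Tx:=x+1$. Let $\Delta\notin\mathbb{Z}$ be an extra symbol and set $T(\Delta):=\Delta$. Then there exists a function $X:\Omega\to\mathbb{Z}\cup\{\Delta\}$ such that $X^{-1}\{\Delta\}$ is countable and $X(\tau\omega)=T(X(\omega))$ for all $\omega\in\Omega$.
   Context: The axiom of choice (equivalently, the well-ordering principle) is assumed. *)

From HB Require Import structures.
From mathcomp Require Import all_boot all_order all_algebra.
From mathcomp Require Import boolp classical_sets functions cardinality.
Set Implicit Arguments. Unset Strict Implicit. Unset Printing Implicit Defensive.
Import Order.TTheory GRing.Theory Num.Theory.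
Local Open Scope ring_scope.

Definition Omega := int -> bool.

Definition tau (w : Omega) : Omega := fun x => w (x - 1).

Definition Delta : option int := None.

Definition T (z : option int) : option int :=
  match z with Some x => Some (x + 1) | None => None end.

From mathcomp Require Import all_boot all_order all_algebra.
From mathcomp Require Import boolp classical_sets functions cardinality.
From mathcomp Require Import intdiv.
Set Implicit Arguments.
Unset Strict Implicit.
Unset Printing Implicit Defensive.
Import Order.TTheory GRing.Theory Num.Theory.
Local Open Scope classical_set_scope.
Local Open Scope ring_scope.

(** The orbits of the shift on periodic configurations are the only obstruction:
periodic configurations are determined by a period and one window of that
length, so there are countably many of them.  On every other orbit the shift
acts freely, so after choosing a base point [r] in each such orbit, every
configuration of it is [shift k r] for a unique [k : int], and [k] is the
required coordinate. *)

Section Shift.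
Variable A : Type.
Implicit Types (w : int -> A) (j k : int).

Definition shift k w : int -> A := fun x => w (x - k).

Lemma shift0 w : shift 0 w = w.
Proof. by apply: funext => x; rewrite /shift subr0. Qed.

Lemma shiftD j k w : shift j (shift k w) = shift (j + k) w.
Proof. by apply: funext => x; rewrite /shift opprD addrA. Qed.

Lemma shiftNK k w : shift (- k) (shift k w) = w.
Proof. by rewrite shiftD addNr shift0. Qed.

Definition periodic w := exists2 k, k != 0 & shift k w = w.

Lemma periodic_shift k w : periodic (shift k w) <-> periodic w.
Proof.
split=> -[j j0 hj]; exists j => //.
  by rewrite -[w](shiftNK k) shiftD addrC -shiftD hj.
by rewrite shiftD addrC -shiftD hj.
Qed.

Lemma periodicP w : periodic w <-> exists n : nat, shift n.+1 w = w.
Proof.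
split=> [[[[|n]|n] // _ hk]|[n hn]]; first by exists n.
  by exists n; rewrite -[in LHS]hk shiftD NegzE addrN shift0.
by exists n.+1%:Z.
Qed.

Lemma shift_periodM k q w : shift k w = w -> shift (q * k) w = w.
Proof.
move=> hk; elim/int_ind: q => [|n IH|n IH]; first by rewrite mul0r shift0.
  by rewrite intS mulrDl mul1r -shiftD IH.
by rewrite intS opprD mulrDl mulN1r -shiftD IH -{1}hk shiftNK.
Qed.

Lemma periodic_modz n w : shift n w = w -> forall x, w x = w (x %% n)%Z.
Proof.
move=> hn x; rewrite -[in LHS](shift_periodM (x %/ n)%Z hn) /shift.
by rewrite {1}(divz_eq x n) addrAC subrr add0r.
Qed.

Lemma shift_aperiodic_inj w j k :
  ~ periodic w -> shift j w = shift k w -> j = k.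
Proof.
move=> aper hjk; apply/eqP; rewrite -subr_eq0; apply: contra_notP aper => /negP jk.
by exists (j - k) => //; rewrite addrC -shiftD hjk shiftNK.
Qed.

End Shift.

Lemma periodic_countable (A : countType) : countable (@periodic A).
Proof.
pose fixed (n : nat) := [set w : int -> A | shift n.+1 w = w].
have fixed_countable n : countable (fixed n).
  apply/countable_injP; exists (fun w => pickle [seq w i%:Z | i <- iota 0 n.+1]).
  move=> w v; rewrite !inE => hw hv /(pcan_inj pickleK) /eq_in_map wv.
  apply: funext => x; rewrite (periodic_modz hw) (periodic_modz hv).
  have mod_ge0 : 0 <= (x %% n.+1)%Z by rewrite modz_ge0.
  rewrite -(gez0_abs mod_ge0); apply: wv; rewrite mem_iota add0n.
  by rewrite -ltz_nat gez0_abs // ltz_pmod.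
apply: (sub_countable (subset_card_le _)
          (bigcup_countable (countableP setT) (fun n _ => fixed_countable n))).
by move=> w /periodicP [n hn]; exists n.
Qed.

Section Coordinate.
Variable A : pointedType.
Implicit Types (w : int -> A) (k : int).

Definition orbit w := range (fun k => shift k w).

Lemma orbit_shift k w : orbit (shift k w) = orbit w.
Proof.
apply/seteqP; split=> _ [j _ <-]; rewrite ?shiftD.
  by exists (j + k).
by exists (j - k) => //; rewrite shiftD addrNK.
Qed.

Definition base_point w := xget (fun=> point) (orbit w).

Lemma base_point_shift k w : base_point (shift k w) = base_point w.
Proof. by rewrite /base_point orbit_shift. Qed.

Lemma base_point_orbit w : exists k, shift k (base_point w) = w.
Proof.
have [k _ hk] : orbit w (base_point w).
  by apply: xgetI; exists 0; rewrite ?shift0.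
by exists (- k); rewrite -hk shiftNK.
Qed.

Definition offset w := xget 0 [set k | shift k (base_point w) = w].

Lemma offsetP w : shift (offset w) (base_point w) = w.
Proof.
have [k hk] := base_point_orbit w.
exact: (@xgetI _ 0 [set j | shift j (base_point w) = w] k hk).
Qed.

Lemma offset_shift k w : ~ periodic w -> offset (shift k w) = offset w + k.
Proof.
move=> aper; apply: (@shift_aperiodic_inj _ (base_point w)).
  by rewrite -(periodic_shift (offset w)) offsetP.
by rewrite -[in LHS](base_point_shift k) offsetP addrC -shiftD offsetP.
Qed.

Definition coordinate w : option int :=
  if `[< periodic w >] then None else Some (offset w).

Lemma coordinate_None w : coordinate w = None -> periodic w.
Proof. by rewrite /coordinate; case: asboolP. Qed.

Lemma coordinate_shift k w :
  coordinate (shift k w) = omap (fun x => x + k) (coordinate w).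
Proof.
rewrite /coordinate; case: (asboolP (periodic w)) => [per|aper].
  by rewrite asboolT // periodic_shift.
by rewrite asboolF ?offset_shift // periodic_shift.
Qed.

End Coordinate.

Theorem lemma3 :
  exists X : Omega -> option int,
    countable (X @^-1` [set Delta]) /\ (forall w : Omega, X (tau w) = T (X w)).
Proof.
exists (@coordinate bool); split.
  apply: sub_countable (periodic_countable bool).
  by apply: subset_card_le => w /coordinate_None.
move=> w; change (tau w) with (shift 1 w).
by rewrite coordinate_shift; case: coordinate.
Qed.
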